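(* Let $G$ be a graph of minimum degree $\delta$ and order $n$, and let $w=(w_0,\dots,w_l)$ with $w_0$ a positive integer, $w_1,\dots,w_l$ nonnegative integers and $w_0\ge\cdots\ge w_l$. Then: (i) If there exists $i\in\{1,\dots,l-1\}$ with $i\delta\ge w_i$, then $\gamma_{(w_0,\dots,w_l)}(G)\le\gamma_{(w_0,\dots,w_i)}(G)$. (ii) If $l\ge i+1\ge w_0$, then $\gamma_{(w_0,\dots,w_i,0,\dots,0)}(G)\le (i+1)\gamma(G)$ (where the vector has length $l+1$). (iii) Let $k,i$ be positive integers with $l\ge ki$, and let $(w'_0,w'_1,\dots,w'_i)$ with $w'_0$ a positive integer and $w'_1,\dots,w'_i$ nonnegative integers. If $i\delta\ge w'_i$ and $w_{kj}=kw'_j$ for every $j\in\{0,1,\dots,i\}$, then $\gamma_{(w_0,\dots,w_l)}(G)\le k\,\gamma_{(w'_0,\dots,w'_i)}(G)$. (iv) Let $k$ and $\beta_1,\dots,\beta_k$ be positive integers. If $l\delta\ge k+w_l>k$ and $w_0+k\ge\beta_1\ge\cdots\ge\beta_k\ge w_1+k$, then $\gamma_{(w_0+k,\beta_1,\dots,\beta_k,w_1+k,\dots,w_l+k)}(G)\le\gamma_{(w_0,\dots,w_l)}(G)+k\bigl(n-\nu_{(w_0,\dots,w_l)}(G)\bigr)$. (v) If $l\delta\ge w_l\ge l\ge 2$, then $\gamma_{(w_0,\dots,w_l)}(G)\le l\,\gamma_{(w_0-l+1,\,w_l-l+1)}(G)$. (vi) If $\delta\ge1$, $w_0\le l-1$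 and $w_{l-1}\ge1$, then $\gamma_{(w_0,\dots,w_{l-2},1)}(G)\le\gamma_{(w_0,\dots,w_{l-1},0)}(G)$.
   Context: All graphs are finite and simple; $N(v)$ denotes the open neighbourhood. For a vector $w=(w_0,\dots,w_l)$ of nonnegative integers with $w_0\ge1$, a function $f:V(G)\to\{0,\dots,l\}$ is a $w$-dominating function if $\sum_{u\in N(v)}f(u)\ge w_i$ for every vertex $v$ with $f(v)=i$; we write $V_i=\{v:f(v)=i\}$. The weight is $\omega(f)=\sum_v f(v)$, and $\gamma_w(G)=\gamma_{(w_0,\dots,w_l)}(G)$ is the minimum weight of a $w$-dominating function on $G$; a $w$-dominating function of weight $\gamma_w(G)$ is a $\gamma_w(G)$-function. $\nu_{(w_0,\dots,w_l)}(G)=\max\{|V_0| : f(V_0,\dots,V_l) \text{ is a } \gamma_{(w_0,\dots,w_l)}(G)\text{-function}\}$. $\gamma(G)$ is the domination number. *)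

(* Simple graph = symmetric irreflexive relation e on a finType T. *)
From mathcomp Require Import all_boot.
Set Implicit Arguments. Unset Strict Implicit. Unset Printing Implicit Defensive.

Section WDom.
Variables (T : finType) (e : rel T).

Definition nbhd (v : T) : {set T} := [set u | e v u].

(* minimum degree delta(G) (0 for the empty graph) *)
Definition mindeg : nat := \big[minn/#|T|]_(v : T) #|nbhd v|.

Definition dominating_set (D : {set T}) : bool :=
  [forall v : T, (v \in D) || [exists u in D, e v u]].
Definition domnum : nat := \big[minn/#|T|]_(D : {set T} | dominating_set D) #|D|.

(* w = (w_0,...,w_l) is a list of length l+1; functions take values in
   {0,...,l} = 'I_(size w). *)
Definition wdom (w : seq nat) (f : {ffun T -> 'I_(size w)}) : bool :=
  [forall v : T, nth 0 w (f v) <= \sum_(u in nbhd v) (f u : nat)].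

Definition weight (w : seq nat) (f : {ffun T -> 'I_(size w)}) : nat :=
  \sum_(v : T) (f v : nat).

(* gamma_w(G): minimum weight of a w-dominating function.  If no
   w-dominating function exists the value is the sentinel #|T| * size w,
   which is strictly larger than the weight of any function. *)
Definition gammaw (w : seq nat) : nat :=
  \big[minn/(#|T| * size w)]_(f : {ffun T -> 'I_(size w)} | wdom f) weight f.

Definition V0 (w : seq nat) (f : {ffun T -> 'I_(size w)}) : {set T} :=
  [set v | (f v : nat) == 0].

Definition nuw (w : seq nat) : nat :=
  \max_(f : {ffun T -> 'I_(size w)} | wdom f && (weight f == gammaw w)) #|V0 f|.

End WDom.

(* Each bound turns an optimal function for the right-hand side into a
   dominating function for the left-hand side. For (i), (iii) and (v) it is
   multiplied by 1, k and l; for (ii) a minimum dominating set gets value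
   i + 1. For (iv), adding k to every nonzero value costs k per vertex outside
   V_0 and, as every neighbourhood contains a nonzero value, raises every
   neighbourhood sum by k. For (vi), values l drop to l - 1, and each vertex of
   value l whose neighbours all have value 0 lifts one of them to 1; the
   lifts are paid for by the drops. When the right-hand side admits no
   dominating function at all, its default value is large enough. *)

From mathcomp Require Import all_boot all_order zify.
Set Implicit Arguments. Unset Strict Implicit. Unset Printing Implicit Defensive.
Import Order.TTheory.

Section BigMinNat.
Variables (I : finType) (P : pred I) (F : I -> nat) (x : nat).

Lemma bigminn_le_cond j : P j -> \big[minn/x]_(i | P i) F i <= F j.
Proof. by rewrite -minEnat -leEnat; apply: bigmin_le_cond. Qed.

Lemma bigminn_le_id : \big[minn/x]_(i | P i) F i <= x.
Proof. by rewrite -minEnat -leEnat; apply: bigmin_le_id. Qed.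

Lemma eq_bigminn j : P j -> (forall i, P i -> F i <= x) ->
  exists2 i, P i & \big[minn/x]_(i | P i) F i = F i.
Proof.
move=> Pj le_Fx; rewrite -minEnat.
have [i Pi ->] := eq_bigmin _ _ F Pj (fun i Pi => (le_Fx i Pi : (F i <= x)%O)).
by exists i.
Qed.

End BigMinNat.

Lemma sum_mem_card (T : finType) (A : {pred T}) : \sum_v ((v \in A) : nat) = #|A|.
Proof. by rewrite -sum1_card [RHS]big_mkcond; apply: eq_bigr => v _; case: (v \in A). Qed.

Lemma sum_add_le (T : finType) (A : {pred T}) (f h : T -> nat) k :
  (forall u, f u <= h u) -> (forall u, 0 < f u -> f u + k <= h u) ->
  0 < \sum_(u in A) f u -> \sum_(u in A) f u + k <= \sum_(u in A) h u.
Proof.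
move=> le_fh le_fkh; rewrite lt0n sum_nat_eq0 => /forallPn[u].
rewrite negb_imply -lt0n => /andP[uA fu_gt0].
rewrite (bigD1 u uA) [X in _ <= X](bigD1 u uA) /= addnAC.
by apply: leq_add; [apply: le_fkh | apply: leq_sum => ? _; apply: le_fh].
Qed.

Section WeightedDomination.
Variables (T : finType) (e : rel T).

Lemma gammaw_le_weight w (f : {ffun T -> 'I_(size w)}) :
  wdom e f -> gammaw e w <= weight f.
Proof. exact: bigminn_le_cond. Qed.

Lemma gammaw_le_default w : gammaw e w <= #|T| * size w.
Proof. exact: bigminn_le_id. Qed.

Lemma weight_le w (f : {ffun T -> 'I_(size w)}) : weight f <= #|T| * size w.
Proof. by rewrite -sum_nat_const; apply: leq_sum => v _; apply: ltnW. Qed.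

Lemma gammaw_attained w :
  (exists f : {ffun T -> 'I_(size w)}, wdom e f) ->
  exists2 f : {ffun T -> 'I_(size w)}, wdom e f & gammaw e w = weight f.
Proof. by case=> f0 /eq_bigminn; apply=> f _; apply: weight_le. Qed.

Lemma gammaw_default w :
  (forall f : {ffun T -> 'I_(size w)}, ~~ wdom e f) ->
  gammaw e w = #|T| * size w.
Proof. by move=> no_dom; rewrite /gammaw big_pred0 // => f; apply/negbTE. Qed.

Lemma gammaw_le_sum w (h : T -> nat) :
  (forall v, h v < size w) ->
  (forall v, nth 0 w (h v) <= \sum_(u in nbhd e v) h u) ->
  gammaw e w <= \sum_v h v.
Proof.
move=> h_lt h_dom; pose f : {ffun T -> 'I_(size w)} := [ffun v => Ordinal (h_lt v)].
have f_dom : wdom e f.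
  apply/forallP => v; rewrite ffunE /=.
  by under eq_bigr => u _ do rewrite ffunE /=.
apply: leq_trans (gammaw_le_weight f_dom) _.
by rewrite /weight; under eq_bigr => v _ do rewrite ffunE.
Qed.

Lemma leq_sum_nbhd v u (h : T -> nat) : e v u -> h u <= \sum_(x in nbhd e v) h x.
Proof. by move=> evu; rewrite (bigD1 u) ?inE //= leq_addr. Qed.

Lemma mindeg_le v : mindeg e <= #|nbhd e v|.
Proof. exact: (bigminn_le_cond (P := predT)). Qed.

Lemma wdom_const w i :
  i < size w -> nth 0 w i <= i * mindeg e ->
  exists f : {ffun T -> 'I_(size w)}, wdom e f.
Proof.
move=> i_lt w_le; exists [ffun _ => Ordinal i_lt]; apply/forallP => v.
rewrite ffunE /=; under eq_bigr => u _ do rewrite ffunE /=.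
by rewrite sum_nat_const (leq_trans w_le) // mulnC leq_mul2r mindeg_le orbT.
Qed.

Lemma gammaw_le_mul w w' m :
  (forall f : {ffun T -> 'I_(size w')}, wdom e f -> gammaw e w <= m * weight f) ->
  (exists f : {ffun T -> 'I_(size w')}, wdom e f) \/
    #|T| * size w <= m * (#|T| * size w') ->
  gammaw e w <= m * gammaw e w'.
Proof.
move=> le_weight [/gammaw_attained[f f_dom ->] | le_default]; first exact: le_weight.
case: (pickP (@wdom _ e w')) => [f f_dom | no_dom].
  by have [g g_dom ->] := gammaw_attained (ex_intro _ f f_dom); apply: le_weight.
rewrite [gammaw e w']gammaw_default => [|f]; last by rewrite no_dom.
exact: leq_trans (gammaw_le_default w) le_default.
Qed.

Lemma gammaw_le_scale w w' k :
  k * (size w').-1 < size w ->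
  (forall j, j < size w' -> nth 0 w (k * j) <= k * nth 0 w' j) ->
  (exists f : {ffun T -> 'I_(size w')}, wdom e f) \/
    #|T| * size w <= k * (#|T| * size w') ->
  gammaw e w <= k * gammaw e w'.
Proof.
move=> k_lt w_le; apply: gammaw_le_mul => f /forallP f_dom.
rewrite /weight big_distrr /=; apply: gammaw_le_sum => v.
  apply: leq_ltn_trans k_lt.
  by rewrite leq_mul2l -ltnS (ltn_predK (ltn_ord (f v))) ltn_ord orbT.
rewrite -big_distrr /=; apply: leq_trans (w_le _ (ltn_ord _)) _.
by rewrite leq_mul2l f_dom orbT.
Qed.

Lemma gammaw_le_take w i :
  i < size w -> nth 0 w i <= i * mindeg e -> gammaw e w <= gammaw e (take i.+1 w).
Proof.
move=> i_lt w_i_le; have size_take : size (take i.+1 w) = i.+1 by rewrite size_takel.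
rewrite -[gammaw e (take _ _)]mul1n; apply: gammaw_le_scale.
- by rewrite size_take mul1n.
- by move=> j; rewrite size_take !mul1n => j_lt; rewrite nth_take.
- by left; apply: (@wdom_const _ i); rewrite ?size_take ?nth_take.
Qed.

Lemma gammaw_le_domnum w m :
  m < size w -> nth 0 w 0 <= m -> nth 0 w m = 0 -> gammaw e w <= m * domnum e.
Proof.
move=> m_lt w0_le wm_eq0.
have [D /forallP D_dom ->] : exists2 D, dominating_set e D & domnum e = #|D|.
  apply: (eq_bigminn (j := setT)) => [|D _]; last exact: max_card.
  by apply/forallP => v; rewrite in_setT.
rewrite mulnC -sum_nat_const big_mkcond /=.
apply: gammaw_le_sum => v; first by case: ifP => // _; apply: leq_ltn_trans m_lt.
case: ifP => [_ | vD]; first by rewrite wm_eq0.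
move: (D_dom v); rewrite vD => /exists_inP[u uD evu].
by apply: leq_trans (leq_sum_nbhd _ evu); rewrite uD.
Qed.

Lemma nuw_attained w :
  (exists f : {ffun T -> 'I_(size w)}, wdom e f) ->
  exists f : {ffun T -> 'I_(size w)},
    [/\ wdom e f, weight f = gammaw e w & #|V0 f| = nuw e w].
Proof.
move=> /gammaw_attained[f0 f0_dom gamma_f0].
pose A := [pred f : {ffun T -> 'I_(size w)} | wdom e f && (weight f == gammaw e w)].
have A_gt0 : 0 < #|A| by apply/card_gt0P; exists f0; rewrite inE f0_dom gamma_f0 eqxx.
have [f /andP[f_dom /eqP f_opt] nu_f] := eq_bigmax_cond (fun f => #|V0 f|) A_gt0.
by exists f; split; rewrite // -nu_f; apply: eq_bigl => g; rewrite inE.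
Qed.

Lemma nuw_default w :
  (forall f : {ffun T -> 'I_(size w)}, ~~ wdom e f) -> nuw e w = 0.
Proof. by move=> no_dom; rewrite /nuw big_pred0 // => f; rewrite (negbTE (no_dom f)). Qed.

Lemma gammaw_shift w w2 k :
  (forall j, j < size w -> 0 < nth 0 w j) -> size w2 = size w + k ->
  nth 0 w2 0 <= nth 0 w 0 + k ->
  (forall j, 0 < j < size w -> nth 0 w2 (j + k) <= nth 0 w j + k) ->
  gammaw e w2 <= gammaw e w + k * (#|T| - nuw e w).
Proof.
move=> w_pos size_w2 w20_le w2_le.
case: (pickP (@wdom _ e w)) => [f0 f0_dom | no_dom]; last first.
  have {}no_dom (f : {ffun T -> 'I_(size w)}) : ~~ wdom e f by rewrite no_dom.
  rewrite nuw_default // [gammaw e w]gammaw_default // subn0 [k * _]mulnC.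
  by rewrite -mulnDr -size_w2 gammaw_le_default.
have [f [f_dom <- <-]] := nuw_attained (ex_intro _ f0 f0_dom).
pose h v := if f v == 0 :> nat then 0 else f v + k.
have sum_h : \sum_v h v = weight f + k * (#|T| - #|V0 f|).
  rewrite -(cardsC (V0 f)) addKn -sum_mem_card big_distrr /weight -big_split /=.
  by apply: eq_bigr => v _; rewrite /h !inE; case: eqP => [->|_]; rewrite ?muln0 ?muln1.
rewrite -sum_h; apply: gammaw_le_sum => v.
  by rewrite size_w2 /h; have := ltn_ord (f v); case: ifP => _; lia.
have nbhd_le : nth 0 w (f v) + k <= \sum_(u in nbhd e v) h u.
  have fv_le : nth 0 w (f v) <= \sum_(u in nbhd e v) (f u : nat) := forallP f_dom v.
  have sum_f_gt0 := leq_trans (w_pos _ (ltn_ord _)) fv_le.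
  apply: leq_trans (@sum_add_le _ _ (fun u => f u : nat) h k _ _ sum_f_gt0).
  - by rewrite leq_add2r.
  - by move=> u; rewrite /h; case: eqP => [->|_] //; apply: leq_addr.
  - by move=> u; rewrite /h lt0n => /negbTE->.
rewrite /h; case: eqP => [fv_eq0 | /eqP fv_neq0]; last first.
  by apply: leq_trans nbhd_le; apply: w2_le; rewrite lt0n fv_neq0 ltn_ord.
by apply: leq_trans w20_le _; rewrite -[X in nth 0 w X]fv_eq0.
Qed.

Lemma gammaw_insert_shift w beta k :
  0 < size w -> (forall j, j < size w -> 0 < nth 0 w j) -> size beta = k ->
  gammaw e ((nth 0 w 0 + k) :: beta ++ [seq x + k | x <- behead w])
    <= gammaw e w + k * (#|T| - nuw e w).
Proof.
case: w => // w0 ws _ w_pos size_beta; apply: gammaw_shift => //.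
  by rewrite /= size_cat size_beta size_map addSn addnC.
case=> // j /andP[_ j_lt]; rewrite addSn /= nth_cat size_beta ltnNge leq_addl /= addnK.
by rewrite (nth_map 0).
Qed.

Section LowerTopLevel.
Hypotheses (e_sym : symmetric e) (mindeg_gt0 : 0 < mindeg e).
Variables (l : nat) (w1 w2 : seq nat).
Hypotheses (l_gt1 : 1 < l) (size_w1 : size w1 = l) (size_w2 : size w2 = l.+1).
Hypothesis w1_le : forall j, j < l -> nth 0 w1 j <= minn (nth 0 w2 j) l.-1.
Hypothesis w1_top : nth 0 w1 l.-1 <= 1.

Definition some_nbr v := odflt v [pick u | e v u].

Lemma some_nbrP v : e v (some_nbr v).
Proof.
rewrite /some_nbr; case: pickP => [u // | no_nbr]; exfalso.
have : #|nbhd e v| = 0 by apply: eq_card0 => u; rewrite inE no_nbr.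
by have := mindeg_le v; lia.
Qed.

Section Lowering.
Variable f : {ffun T -> 'I_(size w2)}.

Definition top_isolated : {set T} :=
  [set v | (f v == l :> nat) && [forall u, e v u ==> (f u == 0 :> nat)]].

Definition rescuers : {set T} := some_nbr @: top_isolated.

Definition lowered v : nat :=
  if f v == l :> nat then l.-1 else if v \in rescuers then 1 else f v.

Lemma rescuersP u :
  u \in rescuers -> f u = 0 :> nat /\ exists2 s, e u s & f s = l :> nat.
Proof.
case/imsetP=> s; rewrite inE => /andP[/eqP fs /forallP s_iso] ->.
split; first by apply/eqP/(implyP (s_iso _)); apply: some_nbrP.
by exists s; rewrite // e_sym some_nbrP.
Qed.

Lemma f_le_top v : f v <= l.
Proof. by rewrite -ltnS -size_w2. Qed.

Lemma lowered_lt v : lowered v < l.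
Proof.
rewrite /lowered; have := f_le_top v.
by case: eqP => [_ | fv_neq]; [|case: ifP => _]; lia.
Qed.

Lemma le_lowered v : f v != l :> nat -> f v <= lowered v.
Proof.
rewrite /lowered => /negbTE->; case: ifP => // /rescuersP[-> _].
exact: leq0n.
Qed.

Lemma lowered_gt0 v : f v != 0 :> nat -> 0 < lowered v.
Proof.
rewrite /lowered => fv_neq0; case: eqP => _; first lia.
by case: ifP; rewrite // lt0n.
Qed.

Lemma sum_lowered : \sum_v lowered v <= weight f.
Proof.
pose top := [set v | f v == l :> nat].
have lowered_le v : lowered v + (v \in top) <= f v + (v \in rescuers).
  rewrite /lowered inE; case: eqP => [-> | _] /=; first lia.
  by case: ifP => [/rescuersP[-> _] | _]; rewrite ?addn0 ?addn1.
have card_le : #|rescuers| <= #|top|.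
  apply: leq_trans (leq_imset_card _ _) (subset_leq_card _).
  by apply/subsetP => v; rewrite !inE => /andP[->].
have : \sum_v (lowered v + (v \in top)) <= \sum_v (f v + (v \in rescuers)).
  by apply: leq_sum => v _; apply: lowered_le.
rewrite !big_split /= !sum_mem_card /weight; lia.
Qed.

Hypothesis f_dom : wdom e f.

Lemma lowered_dom v : nth 0 w1 (lowered v) <= \sum_(u in nbhd e v) lowered u.
Proof.
have w1_lt j : j < l -> nth 0 w1 j <= l.-1 by move/w1_le; rewrite leq_min => /andP[].
case: (pickP [pred u | e v u & f u == l :> nat]) => [u /andP[evu /eqP fu] | no_top].
  apply: leq_trans (leq_sum_nbhd _ evu); rewrite /lowered fu eqxx.
  exact/w1_lt/lowered_lt.
have nbr_le u : e v u -> f u <= lowered u.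
  by move=> evu; apply: le_lowered; move: (no_top u); rewrite /= evu => /negbT.
have sum_le : \sum_(u in nbhd e v) (f u : nat) <= \sum_(u in nbhd e v) lowered u.
  by apply: leq_sum => u; rewrite inE; apply: nbr_le.
case: (eqVneq (f v : nat) l) => [fv | fv_neq].
  rewrite /lowered fv eqxx; apply: leq_trans w1_top _.
  case: (boolP (v \in top_isolated)) => [v_iso | ].
    apply: leq_trans (leq_sum_nbhd _ (some_nbrP v)).
    by rewrite /lowered imset_f // (rescuersP (imset_f _ v_iso)).1; case: eqP; lia.
  rewrite inE fv eqxx => /forallPn[u]; rewrite negb_imply => /andP[evu fu].
  exact: leq_trans (lowered_gt0 fu) (leq_sum_nbhd _ evu).
have v_out : v \notin rescuers.
  apply/negP => /rescuersP[_ [s evs fs]].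
  by move: (no_top s); rewrite /= evs fs eqxx.
have fv_lt : f v < l by rewrite ltn_neqAle fv_neq f_le_top.
rewrite /lowered (negbTE fv_neq) (negbTE v_out).
have := w1_le fv_lt; rewrite leq_min => /andP[w1_le_w2 _].
by apply: leq_trans w1_le_w2 (leq_trans (forallP f_dom v) sum_le).
Qed.

End Lowering.

Lemma gammaw_lower_top : gammaw e w1 <= gammaw e w2.
Proof.
rewrite -[gammaw e w2]mul1n; apply: gammaw_le_mul => [f f_dom | ].
  have lowered_lt_size v : lowered f v < size w1 by rewrite size_w1 lowered_lt.
  rewrite mul1n; apply: leq_trans (sum_lowered f).
  exact: gammaw_le_sum lowered_lt_size (lowered_dom f_dom).
by right; rewrite mul1n size_w1 size_w2 leq_mul2l leqnSn orbT.
Qed.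

End LowerTopLevel.

Lemma gammaw_lower_top_take (e_sym : symmetric e) l w :
  0 < mindeg e -> 1 < l -> size w = l.+1 ->
  (forall j, j < l.-1 -> nth 0 w j <= l.-1) -> 0 < nth 0 w l.-1 ->
  gammaw e (take l.-1 w ++ [:: 1]) <= gammaw e (take l w ++ [:: 0]).
Proof.
move=> mindeg_gt0 l_gt1 size_w w_le w_top.
have size_take j : j <= l.+1 -> size (take j w) = j.
  by move=> j_le; rewrite size_takel ?size_w.
apply: (gammaw_lower_top e_sym mindeg_gt0 l_gt1); rewrite ?size_cat ?size_take /=; try lia.
  move=> j j_lt; rewrite !nth_cat !size_take; try lia.
  rewrite j_lt (nth_take _ j_lt); case: ltnP => [j_lt' | j_ge].
    by rewrite nth_take // leq_min leqnn w_le.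
  have -> : j = l.-1 by lia.
  by rewrite subnn /= leq_min; lia.
by rewrite nth_cat size_take ?ltnn ?subnn //; lia.
Qed.

End WeightedDomination.

Theorem theorem13 (T : finType) (e : rel T)
  (e_sym : symmetric e) (e_irr : irreflexive e)
  (l : nat) (w : seq nat) (size_w : size w = l.+1)
  (w0_pos : 0 < nth 0 w 0)
  (w_noninc : forall i j, i <= j -> j <= l -> nth 0 w j <= nth 0 w i) :
  let delta := mindeg e in
  let n := #|T| in
  (
  (* (i) *)
  (forall i, 1 <= i -> i <= l - 1 -> nth 0 w i <= i * delta ->
     gammaw e w <= gammaw e (take i.+1 w)) /\
  (* (ii) *)
  (forall i, i.+1 <= l -> nth 0 w 0 <= i.+1 ->
     gammaw e (take i.+1 w ++ nseq (l - i) 0) <= i.+1 * domnum e) /\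
  (* (iii) *)
  (forall (k i : nat) (w' : seq nat), 0 < k -> 0 < i -> size w' = i.+1 ->
     0 < nth 0 w' 0 -> k * i <= l -> nth 0 w' i <= i * delta ->
     (forall j, j <= i -> nth 0 w (k * j) = k * nth 0 w' j) ->
     gammaw e w <= k * gammaw e w') /\
  (* (iv) *)
  (forall (k : nat) (beta : seq nat), 0 < k -> size beta = k ->
     (forall j, j < k -> 0 < nth 0 beta j) ->
     k + nth 0 w l <= l * delta -> k < k + nth 0 w l ->
     nth 0 beta 0 <= nth 0 w 0 + k ->
     (forall j, j.+1 < k -> nth 0 beta j.+1 <= nth 0 beta j) ->
     nth 0 w 1 + k <= nth 0 beta k.-1 ->
     gammaw e ((nth 0 w 0 + k) :: beta ++ [seq x + k | x <- behead w])
       <= gammaw e w + k * (n - nuw e w)) /\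
  (* (v) *)
  (nth 0 w l <= l * delta -> l <= nth 0 w l -> 2 <= l ->
     gammaw e w <= l * gammaw e [:: nth 0 w 0 - l + 1; nth 0 w l - l + 1]) /\
  (* (vi) *)
  (1 <= delta -> nth 0 w 0 <= l - 1 -> 1 <= nth 0 w (l - 1) ->
     gammaw e (take (l - 1) w ++ [:: 1]) <= gammaw e (take l w ++ [:: 0]))).
Proof.
move=> delta n; rewrite !subn1.
split=> [i _ i_lt w_i_le | ]; first by apply: gammaw_le_take; rewrite // size_w; lia.
split=> [i i_lt w0_le | ].
  have size_take : size (take i.+1 w) = i.+1 by rewrite size_takel // size_w ltnW.
  apply: gammaw_le_domnum.
  - by rewrite size_cat size_take size_nseq; lia.
  - by rewrite nth_cat size_take nth_take.
  - by rewrite nth_cat size_take ltnn subnn nth_nseq; case: ifP.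
split=> [k i w' k_gt0 i_gt0 size_w' _ ki_le w'_i_le w_eq | ].
  apply: gammaw_le_scale.
  - by rewrite size_w' size_w; lia.
  - by move=> j; rewrite size_w' ltnS => /w_eq->.
  - by left; apply: (@wdom_const _ _ _ i); rewrite ?size_w'.
split=> [k beta _ size_beta _ _ w_l_gt0 _ _ _ | ].
  apply: gammaw_insert_shift => //; first by rewrite size_w.
  move=> j; rewrite size_w ltnS => j_le.
  by apply: leq_trans (w_noninc _ _ j_le (leqnn l)); lia.
split=> [_ l_le_wl l_ge2 | delta_gt0 w0_le w_l1_gt0].
  apply: gammaw_le_scale => /=.
  - by rewrite size_w; lia.
  - by case=> [|[|]] //= _; rewrite ?muln0 ?muln1; nia.
  - by right; rewrite size_w; nia.
apply: gammaw_lower_top_take => //; first lia.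
by move=> j j_lt; apply: leq_trans (w_noninc 0 j _ _) w0_le; lia.
Qed.
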